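(* Let $0\le t_1<t_2$, let $m,k>0$ be constants, let $f\in C[t_1,t_2]$, and let $f^1,f^2\in\mathbb{R}$ be given constants. For $u\in C^2[t_1,t_2]$ define $$I^\tau[u]=\frac{m}{2}\,[u',u']_{t_1}^{t_2}+\frac{k}{2}\,[u,u]_{t_1}^{t_2}-[f,u]_{t_1}^{t_2}-f^1\,u(t_2)+f^2\,u(t_1).$$ Suppose $u\in C^2[t_1,t_2]$ is a stationary point of $I^\tau$, i.e. $\frac{d}{d\varepsilon}I^\tau[u+\varepsilon\eta]\big|_{\varepsilon=0}=0$ for every $\eta\in C^2[t_1,t_2]$. Then $$m u''(s)+k u(s)=f(s),\quad s\in(t_1,t_2),\qquad u'(t_1)=f^1/m,\quad u'(t_2)=f^2/m .$$
   Context: For an interval $[t_1,t_2]$ with $t_1\ge0$ and functions $g,h\in L^2(t_1,t_2)$, the convolution over $[t_1,t_2]$ is defined as $$[g,h]_{t_1}^{t_2}=\int_0^{t_2-t_1}g(t_1+s)\,h(t_2-s)\,ds=\int_{t_1}^{t_2}g(s)\,h(t_1+t_2-s)\,ds .$$ (In the paper the last two terms of $I^\tau$ are written as $-[\tilde f^1-\tilde f^2,u]_{t_1}^{t_2}$ with $\tilde f^1=f^1\delta(s-t_1)$, $\tilde f^2=f^2\delta(s-t_2)$, which by convention evaluate to $-f^1u(t_2)+f^2u(t_1)$.) *)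

From Stdlib Require Import Reals.
From Coquelicot Require Import Coquelicot.
Open Scope R_scope.

Definition continuous_on_cc (a b : R) (f : R -> R) : Prop :=
  forall x, a <= x <= b ->
    filterlim f (within (fun y => a <= y <= b) (locally x)) (locally (f x)).

Definition deriv_on_cc (a b : R) (f f' : R -> R) : Prop :=
  forall x, a <= x <= b ->
    filterlim (fun y => (f y - f x) / (y - x))
      (within (fun y => a <= y <= b /\ y <> x) (locally x)) (locally (f' x)).

Definition C2_on (a b : R) (u u1 u2 : R -> R) : Prop :=
  continuous_on_cc a b u /\ continuous_on_cc a b u1 /\ continuous_on_cc a b u2 /\
  deriv_on_cc a b u u1 /\ deriv_on_cc a b u1 u2.

(* Convolution over [t1,t2]: [g,h]_{t1}^{t2} = \int_{t1}^{t2} g(s) h(t1+t2-s) ds. *)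
Definition conv (t1 t2 : R) (g h : R -> R) : R :=
  RInt (fun s => g s * h (t1 + t2 - s)) t1 t2.

(* The functional I^tau, evaluated at u whose derivative is u1. *)
Definition Itau (t1 t2 m k f1 f2 : R) (f : R -> R) (u u1 : R -> R) : R :=
  m / 2 * conv t1 t2 u1 u1 + k / 2 * conv t1 t2 u u
  - conv t1 t2 f u - f1 * u t2 + f2 * u t1.

From Stdlib Require Import Reals Lra.
From Coquelicot Require Import Coquelicot.
Open Scope R_scope.

(** - Coquelicot's calculus (integration by parts, the fundamental theorem)
    needs functions differentiable on all of R, so u, u', u'' and f are first
    continued from [t1,t2] to R: u by its second-order Taylor polynomial at
    the endpoints, u'' and f by freezing them there (Taylor continuation,
    glued with one-sided derivatives).
  - For a C^2 test function phi on R we vary u in the REFLECTED direction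
    eta(s) = phi(t1 + t2 - s), which turns every convolution [g, eta] into
    the plain integral of g phi.  Then I^tau[u + eps eta] is a quadratic
    polynomial in eps, stationarity kills its linear coefficient, and one
    integration by parts gives the weak Euler-Lagrange equation
      int (m u'' + k u - f) phi + phi(t1)(m u'(t1) - f1) + phi(t2)(f2 - m u'(t2)) = 0.
  - The fundamental lemma of the calculus of variations yields
    m u'' + k u = f on (t1,t2); the test functions phi = 1 and phi(s) = s
    then isolate the two boundary conditions.
*)

Lemma within_limit_eps (P : R -> Prop) (g : R -> R) (x l : R) :
  filterlim g (within P (locally x)) (locally l) <->
  forall eps, 0 < eps -> exists d, 0 < d /\
    forall y, P y -> Rabs (y - x) < d -> Rabs (g y - l) < eps.
Proof.
  rewrite filterlim_locally. split.
  - intros H eps Heps. destruct (H (mkposreal eps Heps)) as [d Hd].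
    exists d; split; [apply cond_pos | intros y Py Hy; exact (Hd y Hy Py)].
  - intros H eps. destruct (H eps (cond_pos eps)) as [d [Hd H']].
    exists (mkposreal d Hd). intros y Hy Py. exact (H' y Py Hy).
Qed.

Lemma continuous_eps (g : R -> R) (x : R) :
  continuous g x <->
  forall eps, 0 < eps -> exists d, 0 < d /\
    forall y, Rabs (y - x) < d -> Rabs (g y - g x) < eps.
Proof.
  unfold continuous. rewrite filterlim_locally. split.
  - intros H eps Heps. destruct (H (mkposreal eps Heps)) as [d Hd].
    exists d; split; [apply cond_pos | intros y Hy; exact (Hd y Hy)].
  - intros H eps. destruct (H eps (cond_pos eps)) as [d [Hd H']].
    exists (mkposreal d Hd). intros y Hy. exact (H' y Hy).
Qed.

Lemma derivative_continuous (F F1 : R -> R) :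
  (forall x, is_derive F x (F1 x)) -> forall x, continuous F x.
Proof. intros H x. apply (@ex_derive_continuous R_AbsRing R_NormedModule). now exists (F1 x). Qed.

Lemma continuous_mul (g h : R -> R) (x : R) :
  continuous g x -> continuous h x -> continuous (fun s => g s * h s) x.
Proof. intros Hg Hh. now apply (continuous_mult g h). Qed.

Lemma continuous_comb (g h : R -> R) (e x : R) :
  continuous g x -> continuous h x -> continuous (fun s => g s + e * h s) x.
Proof.
  intros Hg Hh. apply (continuous_plus g (fun s => e * h s)); [exact Hg |].
  apply (continuous_mult (fun _ => e) h); [apply continuous_const | exact Hh].
Qed.

(** Reflections [s |-> c - s] preserve continuity and differentiability (with a sign);
    they appear because the convolution pairs [g(s)] with [h(t1 + t2 - s)]. *)
Lemma continuous_reflect (h : R -> R) (c x : R) :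
  (forall y, continuous h y) -> continuous (fun s => h (c - s)) x.
Proof.
  intros Hh. apply (continuous_comp (fun s => c - s) h); [| apply Hh].
  apply (@ex_derive_continuous R_AbsRing R_NormedModule). auto_derive. exact I.
Qed.

Lemma reflect_derive (P P1 : R -> R) (c x : R) :
  (forall y, is_derive P y (P1 y)) -> is_derive (fun y => P (c - y)) x (- P1 (c - x)).
Proof.
  intros dP. replace (- P1 (c - x)) with (-1 * P1 (c - x)) by ring.
  apply (is_derive_comp P (fun y => c - y)); [apply dP | auto_derive; auto].
Qed.

Lemma reflect_C2 (phi phi1 phi2 : R -> R) (c : R) :
  (forall x, is_derive phi x (phi1 x)) -> (forall x, is_derive phi1 x (phi2 x)) ->
  (forall x, continuous phi2 x) ->
  (forall x, is_derive (fun s => phi (c - s)) x (- phi1 (c - x))) /\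
  (forall x, is_derive (fun s => - phi1 (c - s)) x (phi2 (c - x))) /\
  (forall x, continuous (fun s => phi2 (c - s)) x).
Proof.
  intros dphi dphi1 cphi2. split; [| split]; intros x.
  - now apply reflect_derive.
  - replace (phi2 (c - x)) with (- - phi2 (c - x)) by ring.
    apply (reflect_derive (fun y => - phi1 y) (fun y => - phi2 y)).
    intros y. exact (is_derive_opp phi1 y (phi2 y) (dphi1 y)).
  - now apply continuous_reflect.
Qed.

(** A function that is C^2 on the whole line is C^2 on [a,b] in the one-sided sense of
    [C2_on]; this is how global test functions become admissible variations. *)
Lemma C2_on_of_global (a b : R) (F F1 F2 : R -> R) :
  (forall x, is_derive F x (F1 x)) -> (forall x, is_derive F1 x (F2 x)) ->
  (forall x, continuous F2 x) -> C2_on a b F F1 F2.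
Proof.
  intros dF dF1 cF2.
  assert (cont_cc : forall G, (forall x, continuous G x) -> continuous_on_cc a b G).
  { intros G cG x _. apply within_limit_eps. intros eps Heps.
    destruct (proj1 (continuous_eps G x) (cG x) eps Heps) as [d [Hd Hnear]].
    exists d. split; [exact Hd | intros y _; apply Hnear]. }
  assert (deriv_cc : forall G G1, (forall x, is_derive G x (G1 x)) -> deriv_on_cc a b G G1).
  { intros G G1 dG x _. apply within_limit_eps. intros eps Heps.
    destruct (proj1 (is_derive_Reals G x (G1 x)) (dG x) eps Heps) as [d Hd].
    exists d. split; [apply cond_pos |]. intros y [_ Hyx] Hy.
    specialize (Hd (y - x)). replace (x + (y - x)) with y in Hd by ring.
    apply Hd; [lra | exact Hy]. }
  repeat split; eauto using derivative_continuous.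
Qed.

(** [clamp a b] is the retraction of R onto [a,b]; it is 1-Lipschitz, so composing a
    function continuous on [a,b] with it gives a function continuous on R. *)
Definition clamp (a b x : R) : R := Rmax a (Rmin b x).

Lemma clamp_range (a b x : R) : a <= b -> a <= clamp a b x <= b.
Proof. unfold clamp, Rmax, Rmin; repeat case Rle_dec; intros; lra. Qed.

Lemma clamp_lipschitz (a b x y : R) :
  a <= b -> Rabs (clamp a b y - clamp a b x) <= Rabs (y - x).
Proof.
  unfold clamp, Rmax, Rmin; repeat case Rle_dec; intros;
    unfold Rabs; repeat case Rcase_abs; intros; lra.
Qed.

Lemma clamp_in (a b x : R) : a <= x <= b -> clamp a b x = x.
Proof. unfold clamp, Rmax, Rmin; repeat case Rle_dec; intros; lra. Qed.

Lemma clamp_lo (a b x : R) : a <= b -> x <= a -> clamp a b x = a.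
Proof. unfold clamp, Rmax, Rmin; repeat case Rle_dec; intros; lra. Qed.

Lemma clamp_hi (a b x : R) : a <= b -> b <= x -> clamp a b x = b.
Proof. unfold clamp, Rmax, Rmin; repeat case Rle_dec; intros; lra. Qed.

Lemma continuous_clamp_comp (a b : R) (F : R -> R) :
  a <= b -> continuous_on_cc a b F -> forall x, continuous (fun y => F (clamp a b y)) x.
Proof.
  intros Hab HF x. apply continuous_eps. intros eps Heps.
  pose proof (clamp_range a b x Hab) as Hc.
  destruct (proj1 (within_limit_eps _ _ _ _) (HF _ Hc) eps Heps) as [d [Hd Hnear]].
  exists d. split; [exact Hd |]. intros y Hy. apply Hnear.
  - now apply clamp_range.
  - eapply Rle_lt_trans; [apply clamp_lipschitz; exact Hab | exact Hy].
Qed.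

(** A function has derivative [l] at [x]
    as soon as both one-sided derivatives equal [l]; this is how derivatives are
    glued at the endpoints of [a,b]. *)
Definition right_deriv (G : R -> R) (x l : R) : Prop :=
  forall eps, 0 < eps -> exists d, 0 < d /\
    forall y, x < y < x + d -> Rabs ((G y - G x) / (y - x) - l) < eps.

Definition left_deriv (G : R -> R) (x l : R) : Prop :=
  forall eps, 0 < eps -> exists d, 0 < d /\
    forall y, x - d < y < x -> Rabs ((G y - G x) / (y - x) - l) < eps.

Lemma is_derive_of_one_sided (G : R -> R) (x l : R) :
  right_deriv G x l -> left_deriv G x l -> is_derive G x l.
Proof.
  intros HR HL. apply is_derive_Reals. intros eps Heps.
  destruct (HR eps Heps) as [d1 [Hd1 H1]]. destruct (HL eps Heps) as [d2 [Hd2 H2]].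
  assert (Hd : 0 < Rmin d1 d2) by (apply Rmin_pos; assumption).
  exists (mkposreal _ Hd). intros h Hh0 Hh. simpl in Hh.
  pose proof (Rmin_l d1 d2). pose proof (Rmin_r d1 d2).
  replace h with (x + h - x) at 2 by ring.
  destruct (Rlt_or_le 0 h).
  - rewrite Rabs_right in Hh by lra. apply H1; lra.
  - rewrite Rabs_left in Hh by lra. apply H2; lra.
Qed.

Lemma one_sided_of_is_derive (G : R -> R) (x l : R) :
  is_derive G x l -> right_deriv G x l /\ left_deriv G x l.
Proof.
  intros H. split; intros eps Heps;
    destruct (proj1 (is_derive_Reals G x l) H eps Heps) as [d Hd];
    exists d; (split; [apply cond_pos |]); intros y Hy;
    specialize (Hd (y - x)); replace (x + (y - x)) with y in Hd by ring;
    apply Hd; try lra.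
  - rewrite Rabs_right; lra.
  - rewrite Rabs_left; lra.
Qed.

Lemma right_deriv_local (G P : R -> R) (x l r : R) : 0 < r ->
  (forall y, x <= y < x + r -> G y = P y) -> right_deriv P x l -> right_deriv G x l.
Proof.
  intros Hr Heq H eps Heps. destruct (H eps Heps) as [d [Hd Hnear]].
  exists (Rmin d r). split; [now apply Rmin_pos |].
  intros y Hy. pose proof (Rmin_l d r). pose proof (Rmin_r d r).
  rewrite (Heq y), (Heq x) by lra. apply Hnear; lra.
Qed.

Lemma left_deriv_local (G P : R -> R) (x l r : R) : 0 < r ->
  (forall y, x - r < y <= x -> G y = P y) -> left_deriv P x l -> left_deriv G x l.
Proof.
  intros Hr Heq H eps Heps. destruct (H eps Heps) as [d [Hd Hnear]].
  exists (Rmin d r). split; [now apply Rmin_pos |].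
  intros y Hy. pose proof (Rmin_l d r). pose proof (Rmin_r d r).
  rewrite (Heq y), (Heq x) by lra. apply Hnear; lra.
Qed.

Lemma right_deriv_of_deriv_on_cc (a b : R) (F F1 : R -> R) (x : R) :
  deriv_on_cc a b F F1 -> a <= x < b -> right_deriv F x (F1 x).
Proof.
  intros H Hx eps Heps.
  destruct (proj1 (within_limit_eps _ _ _ _) (H x ltac:(lra)) eps Heps) as [d [Hd Hnear]].
  exists (Rmin d (b - x)). split; [apply Rmin_pos; lra |].
  intros y Hy. pose proof (Rmin_l d (b - x)). pose proof (Rmin_r d (b - x)).
  apply Hnear; [split; lra | rewrite Rabs_right; lra].
Qed.

Lemma left_deriv_of_deriv_on_cc (a b : R) (F F1 : R -> R) (x : R) :
  deriv_on_cc a b F F1 -> a < x <= b -> left_deriv F x (F1 x).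
Proof.
  intros H Hx eps Heps.
  destruct (proj1 (within_limit_eps _ _ _ _) (H x ltac:(lra)) eps Heps) as [d [Hd Hnear]].
  exists (Rmin d (x - a)). split; [apply Rmin_pos; lra |].
  intros y Hy. pose proof (Rmin_l d (x - a)). pose proof (Rmin_r d (x - a)).
  apply Hnear; [split; lra | rewrite Rabs_left; lra].
Qed.

Definition taylor2 (c p q r : R) (y : R) : R := p + q * (y - c) + r * (y - c) ^ 2 / 2.

Lemma taylor2_derive (c p q r x : R) : is_derive (taylor2 c p q r) x (taylor2 c q r 0 x).
Proof. unfold taylor2. auto_derive; [exact I | field]. Qed.

Definition taylor_ext (a b : R) (F F1 F2 : R -> R) (x : R) : R :=
  taylor2 (clamp a b x) (F (clamp a b x)) (F1 (clamp a b x)) (F2 (clamp a b x)) x.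

Lemma taylor_ext_in a b F F1 F2 x : a <= x <= b -> taylor_ext a b F F1 F2 x = F x.
Proof. intros. unfold taylor_ext, taylor2. rewrite clamp_in by lra. field. Qed.

Lemma taylor_ext_lo a b F F1 F2 x : a <= b -> x <= a ->
  taylor_ext a b F F1 F2 x = taylor2 a (F a) (F1 a) (F2 a) x.
Proof. intros. unfold taylor_ext. now rewrite clamp_lo. Qed.

Lemma taylor_ext_hi a b F F1 F2 x : a <= b -> b <= x ->
  taylor_ext a b F F1 F2 x = taylor2 b (F b) (F1 b) (F2 b) x.
Proof. intros. unfold taylor_ext. now rewrite clamp_hi. Qed.

Lemma taylor_ext_zero (a b : R) (F : R -> R) (x : R) :
  taylor_ext a b F (fun _ => 0) (fun _ => 0) x = F (clamp a b x).
Proof. unfold taylor_ext, taylor2. field. Qed.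

Section TaylorExtension.
Variables (a b : R) (F F1 F2 : R -> R).
Hypothesis (Hab : a < b) (dF : deriv_on_cc a b F F1).
Let G := taylor_ext a b F F1 F2.
Let G1 := taylor_ext a b F1 F2 (fun _ => 0).

Lemma taylor_ext_right_deriv (x : R) : right_deriv G x (G1 x).
Proof.
  destruct (Rlt_or_le x a) as [Hxa | Hax]; [| destruct (Rlt_or_le x b) as [Hxb | Hbx]].
  - apply (right_deriv_local _ (taylor2 a (F a) (F1 a) (F2 a)) _ _ (a - x)); [lra | |].
    + intros y Hy. apply taylor_ext_lo; lra.
    + unfold G1. rewrite taylor_ext_lo by lra.
      apply one_sided_of_is_derive, taylor2_derive.
  - apply (right_deriv_local _ F _ _ (b - x)); [lra | |].
    + intros y Hy. apply taylor_ext_in; lra.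
    + unfold G1. rewrite taylor_ext_in by lra.
      apply (right_deriv_of_deriv_on_cc a b); [exact dF | lra].
  - apply (right_deriv_local _ (taylor2 b (F b) (F1 b) (F2 b)) _ _ 1); [lra | |].
    + intros y Hy. apply taylor_ext_hi; lra.
    + unfold G1. rewrite taylor_ext_hi by lra.
      apply one_sided_of_is_derive, taylor2_derive.
Qed.

Lemma taylor_ext_left_deriv (x : R) : left_deriv G x (G1 x).
Proof.
  destruct (Rle_or_lt x a) as [Hxa | Hax]; [| destruct (Rle_or_lt x b) as [Hxb | Hbx]].
  - apply (left_deriv_local _ (taylor2 a (F a) (F1 a) (F2 a)) _ _ 1); [lra | |].
    + intros y Hy. apply taylor_ext_lo; lra.
    + unfold G1. rewrite taylor_ext_lo by lra.
      apply one_sided_of_is_derive, taylor2_derive.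
  - apply (left_deriv_local _ F _ _ (x - a)); [lra | |].
    + intros y Hy. apply taylor_ext_in; lra.
    + unfold G1. rewrite taylor_ext_in by lra.
      apply (left_deriv_of_deriv_on_cc a b); [exact dF | lra].
  - apply (left_deriv_local _ (taylor2 b (F b) (F1 b) (F2 b)) _ _ (x - b)); [lra | |].
    + intros y Hy. apply taylor_ext_hi; lra.
    + unfold G1. rewrite taylor_ext_hi by lra.
      apply one_sided_of_is_derive, taylor2_derive.
Qed.

Lemma taylor_ext_derive (x : R) : is_derive G x (G1 x).
Proof. apply is_derive_of_one_sided; [apply taylor_ext_right_deriv | apply taylor_ext_left_deriv]. Qed.

End TaylorExtension.

Lemma ex_RInt_of_continuous (g : R -> R) (a b : R) :
  (forall x, continuous g x) -> ex_RInt g a b.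
Proof. intros Hg. apply (@ex_RInt_continuous R_CompleteNormedModule). intros z _. apply Hg. Qed.

Lemma RInt_ext_R (g h : R -> R) (a b : R) :
  (forall x, g x = h x) -> RInt g a b = RInt h a b.
Proof. intros H. apply RInt_ext. intros x _. apply H. Qed.

Lemma RInt_comb (g h : R -> R) (e a b : R) : ex_RInt g a b -> ex_RInt h a b ->
  RInt (fun s => g s + e * h s) a b = RInt g a b + e * RInt h a b.
Proof.
  intros Hg Hh. apply is_RInt_unique.
  apply (is_RInt_plus g (fun s => scal e (h s))); [| apply (is_RInt_scal h)];
    now apply (@RInt_correct R_CompleteNormedModule).
Qed.

Lemma RInt_scale (h : R -> R) (e a b : R) : ex_RInt h a b ->
  RInt (fun s => e * h s) a b = e * RInt h a b.
Proof. intros Hh. exact (RInt_scal h a b e Hh). Qed.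

Lemma RInt_comb3 (A B C : R -> R) (p q r a b : R) :
  ex_RInt A a b -> ex_RInt B a b -> ex_RInt C a b ->
  RInt (fun s => p * A s + q * B s + r * C s) a b
  = p * RInt A a b + q * RInt B a b + r * RInt C a b.
Proof.
  intros HA HB HC. apply is_RInt_unique.
  apply (is_RInt_plus (fun s => p * A s + q * B s) (fun s => scal r (C s))).
  - apply (is_RInt_plus (fun s => scal p (A s)) (fun s => scal q (B s))).
    + apply (is_RInt_scal A). now apply (@RInt_correct R_CompleteNormedModule).
    + apply (is_RInt_scal B). now apply (@RInt_correct R_CompleteNormedModule).
  - apply (is_RInt_scal C). now apply (@RInt_correct R_CompleteNormedModule).
Qed.

Lemma RInt_reflect (g : R -> R) (a b : R) : (forall x, continuous g x) ->
  RInt (fun s => g (a + b - s)) a b = RInt g a b.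
Proof.
  intros Hg.
  assert (Hsub := RInt_comp_lin g (-1) (a + b) a b (ex_RInt_of_continuous _ _ _ Hg)).
  replace (-1 * a + (a + b)) with b in Hsub by ring.
  replace (-1 * b + (a + b)) with a in Hsub by ring.
  rewrite <- (opp_RInt_swap g a b) in Hsub by now apply ex_RInt_of_continuous.
  rewrite RInt_scal in Hsub.
  rewrite (RInt_ext (fun y => g (-1 * y + (a + b))) (fun y => g (a + b - y))) in Hsub
    by (intros; f_equal; ring).
  - change (-1 * RInt (fun y => g (a + b - y)) a b = - RInt g a b) in Hsub. lra.
  - apply ex_RInt_of_continuous. intros x.
    apply (continuous_comp (fun y => -1 * y + (a + b)) g); [| apply Hg].
    apply (@ex_derive_continuous R_AbsRing R_NormedModule). auto_derive. exact I.
Qed.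

Lemma integration_by_parts (P P1 Q Q1 : R -> R) (a b : R) :
  (forall x, is_derive P x (P1 x)) -> (forall x, is_derive Q x (Q1 x)) ->
  (forall x, continuous P1 x) -> (forall x, continuous Q1 x) ->
  RInt (fun s => P1 s * Q s + P s * Q1 s) a b = P b * Q b - P a * Q a.
Proof.
  intros dP dQ cP1 cQ1. apply is_RInt_unique.
  apply (@is_RInt_derive R_CompleteNormedModule (fun s => P s * Q s)).
  - intros x _. apply (is_derive_mult P Q x (P1 x) (Q1 x)); auto. intros; apply Rmult_comm.
  - intros x _. apply (continuous_plus (fun s => P1 s * Q s) (fun s => P s * Q1 s));
      apply continuous_mul; eauto using derivative_continuous.
Qed.

Lemma RInt_nonneg_zero (g : R -> R) (a b : R) : a < b -> (forall x, continuous g x) ->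
  (forall x, a < x < b -> 0 <= g x) -> RInt g a b = 0 -> forall x0, a < x0 < b -> g x0 = 0.
Proof.
  intros Hab Hg Hpos Hint x0 Hx0.
  destruct (Req_dec (g x0) 0) as [E | NE]; [exact E | exfalso].
  assert (Hp : 0 < g x0) by (specialize (Hpos x0 Hx0); lra).
  destruct (proj1 (continuous_eps g x0) (Hg x0) (g x0 / 2) ltac:(lra)) as [d [Hd Hnear]].
  set (c := Rmax a (x0 - d / 2)). set (e := Rmin b (x0 + d / 2)).
  assert (Hc : a <= c /\ x0 - d / 2 <= c /\ c < x0)
    by (unfold c; repeat split; [apply Rmax_l | apply Rmax_r | apply Rmax_lub_lt; lra]).
  assert (He : e <= b /\ e <= x0 + d / 2 /\ x0 < e)
    by (unfold e; repeat split; [apply Rmin_l | apply Rmin_r | apply Rmin_glb_lt; lra]).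
  assert (Hsplit : RInt g a b = RInt g a c + RInt g c e + RInt g e b).
  { rewrite <- (RInt_Chasles g a c b), <- (RInt_Chasles g c e b);
      try apply ex_RInt_of_continuous; auto.
    change (RInt g a c + (RInt g c e + RInt g e b) = RInt g a c + RInt g c e + RInt g e b). ring. }
  assert (Hleft : 0 <= RInt g a c)
    by (apply RInt_ge_0; [lra | now apply ex_RInt_of_continuous | intros; apply Hpos; lra]).
  assert (Hright : 0 <= RInt g e b)
    by (apply RInt_ge_0; [lra | now apply ex_RInt_of_continuous | intros; apply Hpos; lra]).
  assert (Hmid : 0 < RInt g c e).
  { apply RInt_gt_0; [lra | | intros; apply Hg].
    intros x Hx. assert (Hx' : Rabs (x - x0) < d) by (apply Rabs_def1; lra).
    specialize (Hnear x Hx'). apply Rabs_def2 in Hnear. lra. }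
  lra.
Qed.

Lemma antiderivative_derive (g : R -> R) (a x : R) :
  (forall y, continuous g y) -> is_derive (fun s => RInt g a s) x (g x).
Proof.
  intros Hg. apply (is_derive_RInt _ _ a); [| apply Hg].
  exists (mkposreal 1 Rlt_0_1). intros y _.
  apply (@RInt_correct R_CompleteNormedModule). now apply ex_RInt_of_continuous.
Qed.

Lemma derivative_of_vanishing (g : R -> R) (a b x l : R) :
  (forall y, a < y < b -> g y = 0) -> a < x < b -> is_derive g x l -> l = 0.
Proof.
  intros Hg Hx dg.
  assert (Hloc : locally x (fun y => 0 = g y)).
  { assert (Hr : 0 < Rmin (x - a) (b - x)) by (apply Rmin_pos; lra).
    exists (mkposreal _ Hr). intros y Hy. change (Rabs (y - x) < Rmin (x - a) (b - x)) in Hy.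
    apply Rabs_lt_between in Hy. pose proof (Rmin_l (x - a) (b - x)). pose proof (Rmin_r (x - a) (b - x)).
    symmetry. apply Hg. lra. }
  assert (d0 : is_derive g x 0)
    by (apply (is_derive_ext_loc (fun _ => 0)); [exact Hloc | auto_derive; auto]).
  rewrite <- (is_derive_unique _ _ _ dg). exact (is_derive_unique _ _ _ d0).
Qed.

(** The test function is the
    double antiderivative [K] of [H], corrected by a linear term to vanish at [b]; one
    integration by parts turns [int H phi = 0] into [int phi'^2 = 0], so [phi' = 0] on
    (a,b), and hence [H = phi'' = 0]. *)
Lemma fundamental_lemma (a b : R) (H : R -> R) :
  a < b -> (forall x, continuous H x) ->
  (forall phi phi1 phi2 : R -> R,
     (forall x, is_derive phi x (phi1 x)) -> (forall x, is_derive phi1 x (phi2 x)) ->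
     (forall x, continuous phi2 x) -> phi a = 0 -> phi b = 0 ->
     RInt (fun s => H s * phi s) a b = 0) ->
  forall s, a < s < b -> H s = 0.
Proof.
  intros Hab cH Hweak.
  set (K1 := fun s => RInt H a s).
  set (K := fun s => RInt K1 a s).
  assert (dK1 : forall x, is_derive K1 x (H x)) by (intros; now apply antiderivative_derive).
  assert (dK : forall x, is_derive K x (K1 x))
    by (intros; apply antiderivative_derive, (derivative_continuous _ _ dK1)).
  set (phi := fun s => K s - K b * (s - a) / (b - a)).
  set (phi1 := fun s => K1 s - K b / (b - a)).
  assert (dphi : forall x, is_derive phi x (phi1 x)).
  { intros x. apply (is_derive_minus K (fun s => K b * (s - a) / (b - a))); [apply dK |].
    auto_derive; [exact I | field; lra]. }
  assert (dphi1 : forall x, is_derive phi1 x (H x)).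
  { intros x. replace (H x) with (H x - 0) by ring.
    apply (is_derive_minus K1 (fun _ => K b / (b - a))); [apply dK1 |].
    auto_derive; auto. }
  assert (cphi1 : forall x, continuous phi1 x) by exact (derivative_continuous _ _ dphi1).
  assert (phi_a : phi a = 0)
    by (unfold phi, K; rewrite RInt_point; change (0 - RInt K1 a b * (a - a) / (b - a) = 0); field; lra).
  assert (phi_b : phi b = 0) by (unfold phi; field; lra).
  assert (Hsq : RInt (fun s => phi1 s * phi1 s) a b = 0).
  { pose proof (integration_by_parts phi1 H phi phi1 a b dphi1 dphi cH cphi1) as Hparts.
    rewrite phi_a, phi_b in Hparts.
    rewrite (RInt_ext_R _ (fun s => H s * phi s + 1 * (phi1 s * phi1 s))) in Hparts by (intros; ring).
    rewrite RInt_comb in Hparts by (apply ex_RInt_of_continuous; intros; apply continuous_mul;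
      eauto using derivative_continuous).
    rewrite (Hweak phi phi1 H dphi dphi1 cH phi_a phi_b) in Hparts. lra. }
  assert (Hphi1 : forall s, a < s < b -> phi1 s = 0).
  { intros s Hs. apply Rsqr_0_uniq. unfold Rsqr. revert s Hs.
    apply (RInt_nonneg_zero _ a b Hab); [intros; now apply continuous_mul | intros; apply Rle_0_sqr | exact Hsq]. }
  intros s Hs. exact (derivative_of_vanishing phi1 a b s (H s) Hphi1 Hs (dphi1 s)).
Qed.

Lemma conv_ext (t1 t2 : R) (g g' h h' : R -> R) : t1 < t2 ->
  (forall s, t1 <= s <= t2 -> g s = g' s) -> (forall s, t1 <= s <= t2 -> h s = h' s) ->
  conv t1 t2 g h = conv t1 t2 g' h'.
Proof.
  intros Ht Hg Hh. unfold conv. apply RInt_ext. rewrite Rmin_left, Rmax_right by lra.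
  intros x Hx. rewrite Hg, Hh by lra. reflexivity.
Qed.

Lemma ex_RInt_conv (t1 t2 : R) (g h : R -> R) :
  (forall x, continuous g x) -> (forall x, continuous h x) ->
  ex_RInt (fun s => g s * h (t1 + t2 - s)) t1 t2.
Proof.
  intros Hg Hh. apply ex_RInt_of_continuous. intros x.
  apply continuous_mul; [apply Hg | now apply continuous_reflect].
Qed.

Lemma conv_comb_l (t1 t2 e : R) (g g' h : R -> R) :
  (forall x, continuous g x) -> (forall x, continuous g' x) -> (forall x, continuous h x) ->
  conv t1 t2 (fun s => g s + e * g' s) h = conv t1 t2 g h + e * conv t1 t2 g' h.
Proof.
  intros Hg Hg' Hh. unfold conv. rewrite <- RInt_comb by now apply ex_RInt_conv.
  apply RInt_ext_R. intros; ring.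
Qed.

Lemma conv_comb_r (t1 t2 e : R) (g h h' : R -> R) :
  (forall x, continuous g x) -> (forall x, continuous h x) -> (forall x, continuous h' x) ->
  conv t1 t2 g (fun s => h s + e * h' s) = conv t1 t2 g h + e * conv t1 t2 g h'.
Proof.
  intros Hg Hh Hh'. unfold conv. rewrite <- RInt_comb by now apply ex_RInt_conv.
  apply RInt_ext_R. intros; ring.
Qed.

Lemma conv_comm (t1 t2 : R) (g h : R -> R) :
  (forall x, continuous g x) -> (forall x, continuous h x) ->
  conv t1 t2 g h = conv t1 t2 h g.
Proof.
  intros Hg Hh. unfold conv.
  rewrite <- (RInt_reflect (fun s => h s * g (t1 + t2 - s)))
    by (intros; apply continuous_mul; [apply Hh | now apply continuous_reflect]).
  apply RInt_ext_R. intros x. replace (t1 + t2 - (t1 + t2 - x)) with x by ring. ring.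
Qed.

Lemma conv_reflect (t1 t2 : R) (g h : R -> R) :
  conv t1 t2 g (fun s => h (t1 + t2 - s)) = RInt (fun s => g s * h s) t1 t2.
Proof.
  unfold conv. apply RInt_ext. intros x _.
  replace (t1 + t2 - (t1 + t2 - x)) with x by ring. reflexivity.
Qed.

Lemma quadratic_stationary (Q : R -> R) (A B C : R) :
  (forall e, Q e = A + e * B + e ^ 2 * C) -> is_derive Q 0 0 -> B = 0.
Proof.
  intros HQ dQ.
  assert (dP : is_derive (fun e => A + e * B + e ^ 2 * C) 0 B) by (auto_derive; [exact I | ring]).
  apply (is_derive_ext _ _ _ _ HQ) in dQ.
  rewrite <- (is_derive_unique _ _ _ dP). exact (is_derive_unique _ _ _ dQ).
Qed.

(** The linear coefficient of [eps |-> I^tau[U + eps eta]]. *)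
Definition first_variation (t1 t2 m k f1 f2 : R) (F U U1 eta eta1 : R -> R) : R :=
  m * conv t1 t2 U1 eta1 + k * conv t1 t2 U eta - conv t1 t2 F eta
  - f1 * eta t2 + f2 * eta t1.

Lemma Itau_ext (t1 t2 m k f1 f2 : R) (f F u U u1 U1 : R -> R) : t1 < t2 ->
  (forall s, t1 <= s <= t2 -> f s = F s /\ u s = U s /\ u1 s = U1 s) ->
  Itau t1 t2 m k f1 f2 f u u1 = Itau t1 t2 m k f1 f2 F U U1.
Proof.
  intros Ht Heq. unfold Itau.
  rewrite (conv_ext t1 t2 u1 U1 u1 U1), (conv_ext t1 t2 u U u U), (conv_ext t1 t2 f F u U)
    by (auto; intros s Hs; now apply Heq).
  destruct (Heq t1) as [_ [-> _]]; [lra |].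
  destruct (Heq t2) as [_ [-> _]]; [lra |].
  reflexivity.
Qed.

Lemma Itau_expansion (t1 t2 m k f1 f2 e : R) (F U U1 eta eta1 : R -> R) :
  (forall x, continuous F x) -> (forall x, continuous U x) -> (forall x, continuous U1 x) ->
  (forall x, continuous eta x) -> (forall x, continuous eta1 x) ->
  Itau t1 t2 m k f1 f2 F (fun s => U s + e * eta s) (fun s => U1 s + e * eta1 s)
  = Itau t1 t2 m k f1 f2 F U U1 + e * first_variation t1 t2 m k f1 f2 F U U1 eta eta1
    + e ^ 2 * (m / 2 * conv t1 t2 eta1 eta1 + k / 2 * conv t1 t2 eta eta).
Proof.
  intros cF cU cU1 ce ce1. unfold Itau, first_variation.
  rewrite !conv_comb_l by auto using continuous_comb.
  rewrite !conv_comb_r by auto.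
  rewrite (conv_comm t1 t2 eta1 U1), (conv_comm t1 t2 eta U) by auto.
  field.
Qed.

(** For the reflected variation [eta(s) = phi(t1 + t2 - s)] the first variation is an
    ordinary integral; integrating [U1 phi'] by parts exposes the residual
    [m U'' + k U - F] and the natural boundary terms. *)
Lemma first_variation_by_parts (t1 t2 m k f1 f2 : R) (F U U1 U2 phi phi1 : R -> R) :
  (forall x, is_derive U1 x (U2 x)) -> (forall x, is_derive phi x (phi1 x)) ->
  (forall x, continuous F x) -> (forall x, continuous U x) ->
  (forall x, continuous U2 x) -> (forall x, continuous phi1 x) ->
  first_variation t1 t2 m k f1 f2 F U U1
    (fun s => phi (t1 + t2 - s)) (fun s => - phi1 (t1 + t2 - s))
  = RInt (fun s => (m * U2 s + k * U s - F s) * phi s) t1 t2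
    + phi t1 * (m * U1 t1 - f1) + phi t2 * (f2 - m * U1 t2).
Proof.
  intros dU1 dphi cF cU cU2 cphi1.
  pose proof (derivative_continuous _ _ dU1) as cU1.
  pose proof (derivative_continuous _ _ dphi) as cphi.
  assert (Hex : forall g h : R -> R, (forall x, continuous g x) -> (forall x, continuous h x) ->
            ex_RInt (fun s => g s * h s) t1 t2)
    by (intros g h Hg Hh; apply ex_RInt_of_continuous; intros; now apply continuous_mul).
  assert (Hparts : RInt (fun s => U2 s * phi s) t1 t2
                   = U1 t2 * phi t2 - U1 t1 * phi t1 - RInt (fun s => U1 s * phi1 s) t1 t2).
  { rewrite <- (integration_by_parts U1 U2 phi phi1 t1 t2) by assumption.
    rewrite (RInt_ext_R (fun s => U2 s * phi s + U1 s * phi1 s)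
               (fun s => U2 s * phi s + 1 * (U1 s * phi1 s))) by (intros; ring).
    rewrite RInt_comb by auto. lra. }
  unfold first_variation.
  rewrite (conv_reflect t1 t2 U1 (fun y => - phi1 y)), !conv_reflect.
  replace (t1 + t2 - t2) with t1 by ring. replace (t1 + t2 - t1) with t2 by ring.
  rewrite (RInt_ext_R (fun s => U1 s * - phi1 s) (fun s => -1 * (U1 s * phi1 s)))
    by (intros; ring).
  rewrite (RInt_ext_R (fun s => (m * U2 s + k * U s - F s) * phi s)
             (fun s => m * (U2 s * phi s) + k * (U s * phi s) + -1 * (F s * phi s)))
    by (intros; ring).
  rewrite RInt_scale, RInt_comb3, Hparts by auto.
  ring.
Qed.

Definition residual (t1 t2 m k : R) (f u u1 u2 : R -> R) (s : R) : R :=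
  m * u2 (clamp t1 t2 s) + k * taylor_ext t1 t2 u u1 u2 s - f (clamp t1 t2 s).

Lemma residual_in (t1 t2 m k : R) (f u u1 u2 : R -> R) (s : R) : t1 <= s <= t2 ->
  residual t1 t2 m k f u u1 u2 s = m * u2 s + k * u s - f s.
Proof. intros Hs. unfold residual. now rewrite taylor_ext_in, clamp_in. Qed.

Section EulerLagrange.
Variables (t1 t2 m k f1 f2 : R) (f u u1 u2 : R -> R).
Hypothesis (Ht12 : t1 < t2) (Hf : continuous_on_cc t1 t2 f) (Hu : C2_on t1 t2 u u1 u2).
Let U := taylor_ext t1 t2 u u1 u2.
Let U1 := taylor_ext t1 t2 u1 u2 (fun _ => 0).
Let U2 := fun s => u2 (clamp t1 t2 s).
Let F := fun s => f (clamp t1 t2 s).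

Lemma extension_derive : (forall x, is_derive U x (U1 x)) /\ (forall x, is_derive U1 x (U2 x)).
Proof.
  destruct Hu as [_ [_ [_ [du du1]]]].
  split; intros x; [| unfold U2; rewrite <- taylor_ext_zero]; now apply taylor_ext_derive.
Qed.

Lemma extension_continuous : forall x, continuous U2 x /\ continuous F x.
Proof.
  destruct Hu as [_ [_ [cu2 _]]]. intros x. unfold U2, F. split.
  - apply continuous_clamp_comp; [lra | exact cu2].
  - apply continuous_clamp_comp; [lra | exact Hf].
Qed.

Lemma residual_continuous : forall x, continuous (residual t1 t2 m k f u u1 u2) x.
Proof.
  intros x. destruct extension_derive as [dU _].
  destruct (extension_continuous x) as [cU2 cF].
  apply (continuous_minus (fun s => m * U2 s + k * U s) F); [| exact cF].
  apply (continuous_plus (fun s => m * U2 s) (fun s => k * U s)).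
  - apply (continuous_mult (fun _ => m) U2); [apply continuous_const | exact cU2].
  - apply (continuous_mult (fun _ => k) U); [apply continuous_const |].
    exact (derivative_continuous _ _ dU x).
Qed.

Hypothesis Hstat : forall eta eta1 eta2 : R -> R, C2_on t1 t2 eta eta1 eta2 ->
  is_derive (fun eps : R => Itau t1 t2 m k f1 f2 f
                              (fun s => u s + eps * eta s) (fun s => u1 s + eps * eta1 s)) 0 0.

Lemma weak_euler_lagrange (phi phi1 phi2 : R -> R) :
  (forall x, is_derive phi x (phi1 x)) -> (forall x, is_derive phi1 x (phi2 x)) ->
  (forall x, continuous phi2 x) ->
  RInt (fun s => residual t1 t2 m k f u u1 u2 s * phi s) t1 t2
  + phi t1 * (m * u1 t1 - f1) + phi t2 * (f2 - m * u1 t2) = 0.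
Proof.
  intros dphi dphi1 cphi2.
  pose proof (derivative_continuous _ _ dphi1) as cphi1.
  destruct extension_derive as [dU dU1].
  pose proof (derivative_continuous _ _ dU) as cU.
  pose proof (derivative_continuous _ _ dU1) as cU1.
  assert (cU2 : forall x, continuous U2 x) by apply extension_continuous.
  assert (cF : forall x, continuous F x) by apply extension_continuous.
  destruct (reflect_C2 phi phi1 phi2 (t1 + t2) dphi dphi1 cphi2) as [deta [deta1 ceta2]].
  set (eta := fun s => phi (t1 + t2 - s)) in deta.
  set (eta1 := fun s => - phi1 (t1 + t2 - s)) in deta, deta1.
  set (eta2 := fun s => phi2 (t1 + t2 - s)) in deta1, ceta2.
  pose proof (derivative_continuous _ _ deta) as ceta.
  pose proof (derivative_continuous _ _ deta1) as ceta1.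
  pose proof (Hstat eta eta1 eta2 (C2_on_of_global t1 t2 _ _ _ deta deta1 ceta2)) as Hd.
  (* on [t1,t2] the variations of u and of its extension U coincide *)
  assert (Hglobal : forall e,
    Itau t1 t2 m k f1 f2 f (fun s => u s + e * eta s) (fun s => u1 s + e * eta1 s)
    = Itau t1 t2 m k f1 f2 F (fun s => U s + e * eta s) (fun s => U1 s + e * eta1 s)).
  { intros e. apply Itau_ext; [exact Ht12 |]. intros s Hs.
    unfold F, U, U1. rewrite clamp_in, !taylor_ext_in by lra. auto. }
  apply (is_derive_ext _ _ _ _ Hglobal) in Hd.
  pose proof (quadratic_stationary _ _ _ _
    (fun e => Itau_expansion t1 t2 m k f1 f2 e F U U1 eta eta1 cF cU cU1 ceta ceta1) Hd) as Hfv.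
  unfold eta, eta1 in Hfv.
  rewrite (first_variation_by_parts t1 t2 m k f1 f2 F U U1 U2 phi phi1) in Hfv by assumption.
  unfold U1 in Hfv. rewrite !taylor_ext_in in Hfv by lra.
  exact Hfv.
Qed.

(** Once the residual vanishes inside, the test functions [1] and [s |-> s] isolate the
    two boundary terms. *)
Lemma natural_boundary_conditions :
  (forall s, t1 < s < t2 -> residual t1 t2 m k f u u1 u2 s = 0) ->
  m * u1 t1 = f1 /\ m * u1 t2 = f2.
Proof.
  intros Hres.
  assert (Hvanish : forall phi : R -> R, RInt (fun s => residual t1 t2 m k f u u1 u2 s * phi s) t1 t2 = 0).
  { intros phi. rewrite (RInt_ext _ (fun _ => 0)).
    - rewrite RInt_const. change ((t2 - t1) * 0 = 0). ring.
    - rewrite Rmin_left, Rmax_right by lra. intros s Hs. rewrite Hres by exact Hs. apply Rmult_0_l. }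
  pose proof (weak_euler_lagrange (fun _ => 1) (fun _ => 0) (fun _ => 0)
    ltac:(intros; auto_derive; auto) ltac:(intros; auto_derive; auto)
    ltac:(intros; apply continuous_const)) as Hconst.
  pose proof (weak_euler_lagrange (fun s => s) (fun _ => 1) (fun _ => 0)
    ltac:(intros; auto_derive; auto) ltac:(intros; auto_derive; auto)
    ltac:(intros; apply continuous_const)) as Hid.
  rewrite Hvanish in Hconst, Hid. cbv beta in Hconst, Hid.
  assert (Hright : (t2 - t1) * (f2 - m * u1 t2) = 0) by nra.
  apply Rmult_integral in Hright. destruct Hright as [Hdeg | Hright]; [lra |].
  split; lra.
Qed.

End EulerLagrange.

Theorem proposition3
  (t1 t2 m k f1 f2 : R) (f u u1 u2 : R -> R)
  (Ht1 : 0 <= t1) (Ht12 : t1 < t2) (Hm : 0 < m) (Hk : 0 < k)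
  (Hf : continuous_on_cc t1 t2 f)
  (Hu : C2_on t1 t2 u u1 u2)
  (Hstat : forall eta eta1 eta2 : R -> R, C2_on t1 t2 eta eta1 eta2 ->
      is_derive
        (fun eps : R => Itau t1 t2 m k f1 f2 f
                          (fun s => u s + eps * eta s)
                          (fun s => u1 s + eps * eta1 s))
        0 0) :
  (forall s, t1 < s < t2 -> m * u2 s + k * u s = f s) /\
  u1 t1 = f1 / m /\ u1 t2 = f2 / m.
Proof.
  assert (Hinterior : forall s, t1 < s < t2 -> residual t1 t2 m k f u u1 u2 s = 0).
  { apply fundamental_lemma; [exact Ht12 | now apply residual_continuous |].
    intros phi phi1 phi2 dphi dphi1 cphi2 Hphi1 Hphi2.
    pose proof (weak_euler_lagrange t1 t2 m k f1 f2 f u u1 u2 Ht12 Hf Hu Hstat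
                  phi phi1 phi2 dphi dphi1 cphi2) as Hweak.
    rewrite Hphi1, Hphi2 in Hweak. lra. }
  destruct (natural_boundary_conditions t1 t2 m k f1 f2 f u u1 u2 Ht12 Hf Hu Hstat Hinterior)
    as [Hleft Hright].
  split; [| split].
  - intros s Hs. pose proof (Hinterior s Hs) as Hres.
    rewrite residual_in in Hres by lra. lra.
  - rewrite <- Hleft. field. lra.
  - rewrite <- Hright. field. lra.
Qed.
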